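(* Let $(\varphi_A)_{A\subseteq\{1,\dots,m\}}$ be $\{0,1\}$-valued statistics of the form $\varphi_A=\max_{t\in[0,1]}\varphi_{A,t}$ with $\varphi_{A,t}\in\{0,1\}$. For $S\subseteq\{1,\dots,m\}$, $n\in\{0,\dots,|S|\}$, $t\in[0,1]$, let $\varphi_{S,n,t}=\min\{\varphi_{A,t}: A\subseteq\{1,\dots,m\},\ |A\cap S|=n\}$, and define $$\hat V^{\mathrm{SC1}}_\varphi(S)=\max\{n\in\{0,\dots,|S|\}:\max_{t\in[0,1]}\varphi_{S,n,t}=0\},\qquad \hat V^{\mathrm{SC2}}_\varphi(S)=\min_{t\in[0,1]}\max\{n\in\{0,\dots,|S|\}:\varphi_{S,n,t}=0\}.$$ Then for all $S\subseteq\{1,\dots,m\}$, $\hat V^{\mathrm{IP}}_\varphi(S)\le\hat V^{\mathrm{SC1}}_\varphi(S)\le\hat V^{\mathrm{SC2}}_\varphi(S)$.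
   Context: Inversion procedure bound: $\mathcal N_\varphi=\{A\subseteq\{1,\dots,m\}:\varphi_A=0\}$ and $\hat V^{\mathrm{IP}}_\varphi(S)=\max_{A\in\mathcal N_\varphi}|A\cap S|$. Convention: the maximum of an empty set of integers is $0$. *)

From HB Require Import structures.
From mathcomp Require Import all_boot all_order all_algebra.
From mathcomp Require Import boolp reals.
Set Implicit Arguments. Unset Strict Implicit. Unset Printing Implicit Defensive.
Import Order.TTheory GRing.Theory Num.Theory.

(* Subsets of {1,...,m} are modelled as {set 'I_m}; t ranges over [0,1] in an
   arbitrary real type R.  phi A t is the {0,1}-valued phi_{A,t} (true = 1). *)
Section Defs.
Variables (R : realType) (m : nat) (phi : {set 'I_m} -> R -> bool).

Definition inI01 (t : R) : Prop := (0 <= t)%R /\ (t <= 1)%R.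

Definition phiA (A : {set 'I_m}) : bool := `[< exists t, inI01 t /\ phi A t >].

(* V^IP(S) = max_{A in N_phi} |A cap S|, max of empty set = 0 *)
Definition V_IP (S : {set 'I_m}) : nat :=
  \max_(A : {set 'I_m} | ~~ phiA A) #|A :&: S|.

Definition phiSnt (S : {set 'I_m}) (n : nat) (t : R) : bool :=
  \big[andb/true]_(A : {set 'I_m} | #|A :&: S| == n) phi A t.

Definition phiSn (S : {set 'I_m}) (n : nat) : bool :=
  `[< exists t, inI01 t /\ phiSnt S n t >].

Definition V_SC1 (S : {set 'I_m}) : nat :=
  \max_(n < #|S|.+1 | ~~ phiSn S n) (n : nat).

Definition maxzero (S : {set 'I_m}) (t : R) : nat :=
  \max_(n < #|S|.+1 | ~~ phiSnt S n t) (n : nat).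

Definition SC2_pred (S : {set 'I_m}) : pred nat :=
  fun k => `[< exists t, inI01 t /\ maxzero S t = k >].

Lemma SC2_ex (S : {set 'I_m}) : exists k, SC2_pred S k.
Proof.
exists (maxzero S 0); apply/asboolP; exists 0%R; split=> //; split=> //; exact: ler01.

Qed.

Definition V_SC2 (S : {set 'I_m}) : nat := ex_minn (SC2_ex S).
End Defs.

From HB Require Import structures.
From mathcomp Require Import all_boot all_order all_algebra.
From mathcomp Require Import boolp reals.

(* A set A with phi_A = 0 makes n = |A cap S| a witness for V^SC1, because
   phi_{S,n,t} <= phi_{A,t} for every t.  Likewise every n counted by V^SC1
   is counted by the inner maximum of V^SC2 at each t, so V^SC1 bounds each
   value whose minimum is V^SC2. *)

Section ClosedTesting.
Variables (R : realType) (m : nat) (phi : {set 'I_m} -> R -> bool).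

Lemma card_setI_ltS (A S : {set 'I_m}) : (#|A :&: S| < #|S|.+1)%N.
Proof. by rewrite ltnS subset_leq_card // subsetIr. Qed.

Lemma phiSnt_card (S A : {set 'I_m}) (t : R) :
  phiSnt phi S #|A :&: S| t -> phi A t.
Proof. by rewrite /phiSnt (bigD1 A) //= => /andP[]. Qed.

Lemma phiSn_card (S A : {set 'I_m}) : phiSn phi S #|A :&: S| -> phiA phi A.
Proof.
by move=> /asboolP[t [t01 /phiSnt_card phiAt]]; apply/asboolP; exists t.
Qed.

Lemma V_IP_le_SC1 (S : {set 'I_m}) : (V_IP phi S <= V_SC1 phi S)%N.
Proof.
apply/bigmax_leqP => A phiA0.
pose n : 'I_#|S|.+1 := Ordinal (card_setI_ltS A S).
apply: (@leq_bigmax_cond _ (fun n : 'I_#|S|.+1 => ~~ phiSn phi S n) _ n).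
by apply: contra phiA0; apply: phiSn_card.
Qed.

Lemma V_SC1_le_maxzero (S : {set 'I_m}) (t : R) :
  inI01 t -> (V_SC1 phi S <= maxzero phi S t)%N.
Proof.
move=> t01; apply/bigmax_leqP => n phiSn0.
apply: (@leq_bigmax_cond _ (fun n : 'I_#|S|.+1 => ~~ phiSnt phi S n t)).
by apply: contra phiSn0 => phiSnt1; apply/asboolP; exists t.
Qed.

Lemma V_SC1_le_SC2 (S : {set 'I_m}) : (V_SC1 phi S <= V_SC2 phi S)%N.
Proof.
rewrite /V_SC2; case: ex_minnP => k /asboolP[t [t01 <-]] _.
exact: V_SC1_le_maxzero.
Qed.

End ClosedTesting.

Theorem mainTheorem5 (R : realType) (m : nat) (phi : {set 'I_m} -> R -> bool)
  (S : {set 'I_m}) :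
  (V_IP phi S <= V_SC1 phi S <= V_SC2 phi S)%N.
Proof. by rewrite V_IP_le_SC1 V_SC1_le_SC2. Qed.
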